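(* Let $f(z)=z+\sum_{k=2}^{\infty}a_kz^k$ be analytic in $\mathbb{D}=\{z:|z|<1\}$ with $zf'(z)-f(z)=\frac12 z^2\phi(z)$ for all $z\in\mathbb{D}$, where $\phi$ is analytic in $\mathbb{D}$ and $|\phi(z)|\le1$. Let $r_{\mathcal S}$ denote the positive root (in $(0,1)$) of \[(1-r)\ln(1-r)+2-3r=0.\] Then for every $n\ge2$ the partial sum $s_n(z;f)=z+\sum_{k=2}^n a_kz^k$ is close-to-convex in the disk $|z|<r_{\mathcal S}$.
   Context: A normalized analytic function $g$ is close-to-convex in a disk if there is a convex function $h$ there with $\mathrm{Re}(g'(z)/h'(z))>0$ in the disk (in particular this holds if $\mathrm{Re}\,g'(z)>0$ there). *)

(* Complex derivatives are Coquelicot's is_derive / ex_derive over C_AbsRing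
   (genuine complex differentiability); series are is_series in the complex
   normed module C_NormedModule. *)
From Stdlib Require Import Reals.
From Coquelicot Require Import Coquelicot.
Open Scope C_scope.

Definition disk (r : R) (z : C) : Prop := (Cmod z < r)%R.

Definition analytic_on_disk (r : R) (f : C -> C) : Prop :=
  forall z : C, disk r z -> ex_derive (K := C_AbsRing) (V := C_NormedModule) f z.

Definition convex_in_disk (r : R) (h : C -> C) : Prop :=
  analytic_on_disk r h /\
  (forall z w : C, disk r z -> disk r w -> h z = h w -> z = w) /\
  (forall (z w : C) (t : R), disk r z -> disk r w -> (0 <= t <= 1)%R ->
     exists u : C, disk r u /\
       h u = (RtoC (1 - t) * h z + RtoC t * h w)).

Definition close_to_convex_in_disk (r : R) (g : C -> C) : Prop :=
  exists h : C -> C, convex_in_disk r h /\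
    forall z : C, disk r z ->
      exists dg dh : C,
        is_derive (K := C_AbsRing) (V := C_NormedModule) g z dg /\
        is_derive (K := C_AbsRing) (V := C_NormedModule) h z dh /\
        (0 < Re (dg / dh))%R.

Definition partial_sum (a : nat -> C) (n : nat) (z : C) : C :=
  z + sum_n_m (fun k => a k * pow_n (K := C_Ring) z k) 2 n.

(* Since z f' - f = sum_k (k - 1) a_k z^k = z^2 phi / 2 with |phi| <= 1, Cauchy's
   estimate (obtained here by averaging over roots of unity rather than by a contour
   integral) gives |a_k| <= 1 / (2 (k - 1)) for k >= 2.  Hence for |z| = r,
     |s_n'(z) - 1| <= sum_(k >= 2) k r^(k-1) / (2 (k - 1)) <= (r / (1 - r) - ln (1 - r)) / 2,
   which is < 1 exactly when (1 - r) ln (1 - r) + 2 - 3 r > 0, i.e. for r < r_S.  So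
   Re s_n' > 0 on |z| < r_S, and s_n is close-to-convex with respect to the identity. *)

From Stdlib Require Import Reals Lra Lia Arith.
From Coquelicot Require Import Coquelicot.
Open Scope C_scope.

(* [ring] and [field] only find the structure of [C] (resp. [R]) when the equality is
   stated at that type rather than at the carrier of a Coquelicot structure. *)
Ltac Cring := match goal with |- ?u = ?v => change (@eq C u v) end; ring.
Ltac Rfield := match goal with |- ?u = ?v => change (@eq R u v) end; field.

(** * The radius inequality *)

Section RadiusInequality.
Local Open Scope R_scope.

Lemma neg3_lt_ln (u : R) : 1/3 < u -> -3 < ln u.
Proof.
  intros Hu.
  assert (He : 4 < exp 3) by (pose proof (exp_ineq1 3); lra).
  assert (Hinv : exp (- (3)) < 1/3).
  { rewrite exp_Ropp. apply (Rmult_lt_reg_r (exp 3)); [apply exp_pos|].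
    rewrite Rinv_l by lra. lra. }
  replace (-3) with (- (3)) by ring.
  rewrite <- (ln_exp (- (3))). apply ln_increasing; [apply exp_pos | lra].
Qed.

Lemma root_lt_2_3 (rS : R) : 0 < rS < 1 ->
  (1 - rS) * ln (1 - rS) + 2 - 3 * rS = 0 -> rS < 2/3.
Proof.
  intros HrS Hroot. apply Rnot_le_lt. intros Hge.
  assert (Hln : ln (1 - rS) < 0) by (rewrite <- ln_1; apply ln_increasing; lra).
  assert (0 < 1 - rS) by lra.
  nra.
Qed.

Lemma root_equation_lhs_pos (rS r : R) : 0 < rS < 1 ->
  (1 - rS) * ln (1 - rS) + 2 - 3 * rS = 0 ->
  0 <= r < rS -> 0 < (1 - r) * ln (1 - r) + 2 - 3 * r.
Proof.
  intros HrS Hroot Hr.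
  (* The left-hand side at r exceeds its value 0 at rS by
     (rS - r) (3 + ln (1 - r)) + (1 - rS) (ln (1 - r) - ln (1 - rS)). *)
  pose proof (root_lt_2_3 rS HrS Hroot).
  assert (-3 < ln (1 - r)) by (apply neg3_lt_ln; lra).
  assert (ln (1 - rS) <= ln (1 - r)) by (apply ln_le; lra).
  assert (0 < (rS - r) * (3 + ln (1 - r))) by (apply Rmult_lt_0_compat; lra).
  assert (0 <= (1 - rS) * (ln (1 - r) - ln (1 - rS))) by (apply Rmult_le_pos; lra).
  nra.
Qed.

Lemma geom_sum_shift (x : R) (n : nat) :
  (1 - x) * sum_n_m (fun k => x ^ (k - 2)) 2 (S n) = 1 - x ^ n.
Proof.
  induction n as [|n IH].
  - rewrite sum_n_m_zero by lia. change zero with 0. simpl. ring.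
  - rewrite sum_n_Sm by lia. change plus with Rplus.
    rewrite Rmult_plus_distr_l, IH. replace (S (S n) - 2)%nat with n by lia.
    simpl. ring.
Qed.

Lemma geom_sum_le (r : R) (n : nat) : 0 <= r < 1 ->
  sum_n_m (fun k => r ^ (k - 1)) 2 n <= r / (1 - r).
Proof.
  intros Hr. destruct n as [|n].
  { rewrite sum_n_m_zero by lia. apply Rdiv_le_0_compat; lra. }
  rewrite (sum_n_m_ext_loc _ (fun k => r * r ^ (k - 2))).
  2: { intros k Hk. replace (k - 1)%nat with (S (k - 2)) by lia. reflexivity. }
  rewrite (sum_n_m_mult_l (K := R_Ring)). change mult with Rmult.
  assert (E := geom_sum_shift r n). pose proof (pow_le r n ltac:(lra)).
  set (s := sum_n_m _ 2 (S n)) in *.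
  apply (Rmult_le_reg_l (1 - r)); [lra|].
  replace ((1 - r) * (r / (1 - r))) with r by (field; lra).
  nra.
Qed.

Lemma is_derive_log_partial_sum (n : nat) (x : R) :
  is_derive (fun y => sum_n_m (fun k => y ^ (k - 1) / INR (k - 1)) 2 n) x
            (sum_n_m (fun k => x ^ (k - 2)) 2 n).
Proof.
  induction n as [|[|n] IH].
  1, 2: apply (is_derive_ext (fun _ => 0)); [intros t; rewrite sum_n_m_zero by lia; reflexivity|].
  1, 2: rewrite sum_n_m_zero by lia; apply (is_derive_const (K := R_AbsRing) (V := R_NormedModule)).
  apply (is_derive_ext (fun y => sum_n_m (fun k => y ^ (k - 1) / INR (k - 1)) 2 (S n)
                                 + y ^ S n / INR (S n))).
  { intros t. rewrite (sum_n_Sm _ 2 (S n)) by lia. reflexivity. }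
  rewrite (sum_n_Sm _ 2 (S n)) by lia.
  apply (is_derive_plus (K := R_AbsRing) (V := R_NormedModule)); [exact IH|].
  replace (S (S n) - 2)%nat with n by lia.
  assert (INR (S n) <> 0) by (apply not_0_INR; lia).
  auto_derive; [auto|]. simpl pred. field. auto.
Qed.

(* The partial sums of [-ln (1 - r) = sum_(j >= 1) r^j / j]. *)
Lemma log_sum_le (r : R) (n : nat) : 0 <= r < 1 ->
  sum_n_m (fun k => r ^ (k - 1) / INR (k - 1)) 2 n <= - ln (1 - r).
Proof.
  intros Hr.
  set (F := fun y => - ln (1 - y) - sum_n_m (fun k => y ^ (k - 1) / INR (k - 1)) 2 n).
  set (dF := fun y => / (1 - y) - sum_n_m (fun k => y ^ (k - 2)) 2 n).
  assert (HD : forall y, y < 1 -> is_derive F y (dF y)).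
  { intros y Hy. apply (is_derive_minus (K := R_AbsRing) (V := R_NormedModule)).
    - auto_derive; [lra|]. field. lra.
    - apply is_derive_log_partial_sum. }
  assert (HdF : forall y, 0 <= y < 1 -> 0 <= dF y).
  { intros y Hy. unfold dF. destruct n as [|n].
    - rewrite sum_n_m_zero by lia. change zero with 0.
      pose proof (Rinv_0_lt_compat (1 - y)). lra.
    - pose proof (geom_sum_shift y n). pose proof (pow_le y n ltac:(lra)).
      apply (Rmult_le_reg_l (1 - y)); [lra|].
      rewrite Rmult_minus_distr_l, Rinv_r by lra. lra. }
  assert (HF0 : F 0 = 0).
  { unfold F. rewrite Rminus_0_r, ln_1, (sum_n_m_ext_loc _ (fun _ => 0)).
    - rewrite sum_n_m_const, Rmult_0_r. ring.
    - intros k Hk. replace (k - 1)%nat with (S (k - 2)) by lia. simpl. lra. }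
  destruct (MVT_gen F 0 r dF) as [c [Hc E]].
  - intros y Hy. apply HD. rewrite Rmax_right in Hy; lra.
  - intros y Hy. apply continuity_pt_filterlim.
    apply (ex_derive_continuous (K := R_AbsRing) (V := R_NormedModule)).
    eexists. apply HD. rewrite Rmax_right in Hy; lra.
  - rewrite Rmin_left, Rmax_right in Hc by lra.
    rewrite HF0 in E. unfold F in E.
    pose proof (Rmult_le_pos (dF c) (r - 0) (HdF c ltac:(lra)) ltac:(lra)). lra.
Qed.

Lemma majorant_sum_lt_1 (rS r : R) (n : nat) : 0 < rS < 1 ->
  (1 - rS) * ln (1 - rS) + 2 - 3 * rS = 0 -> 0 <= r < rS ->
  sum_n_m (fun k => INR k / (2 * INR (k - 1)) * r ^ (k - 1)) 2 n < 1.
Proof.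
  intros HrS Hroot Hr.
  pose proof (root_equation_lhs_pos rS r HrS Hroot Hr).
  rewrite (sum_n_m_ext_loc _ (fun k => / 2 * (r ^ (k - 1) + r ^ (k - 1) / INR (k - 1)))).
  2: { intros k Hk. assert (INR (k - 1) <> 0) by (apply not_0_INR; lia).
       replace (INR k) with (INR (k - 1) + 1) by (rewrite <- S_INR; f_equal; lia).
       Rfield. auto. }
  rewrite (sum_n_m_mult_l (K := R_Ring)), (sum_n_m_plus (G := R_AbelianMonoid)).
  change mult with Rmult. change plus with Rplus.
  pose proof (geom_sum_le r n ltac:(lra)). pose proof (log_sum_le r n ltac:(lra)).
  assert (r / (1 - r) - ln (1 - r) < 2).
  { apply (Rmult_lt_reg_l (1 - r)); [lra|].
    replace ((1 - r) * (r / (1 - r) - ln (1 - r))) with (r - (1 - r) * ln (1 - r))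
      by (field; lra).
    lra. }
  lra.
Qed.

End RadiusInequality.

(** * Differentiating complex power series *)

Local Notation cpow z k := (pow_n (K := C_Ring) z k).

Lemma cpow_mul (x y : C) (k : nat) : cpow (x * y) k = cpow x k * cpow y k.
Proof.
  induction k as [|k IH]; simpl.
  - change one with (RtoC 1). ring.
  - change mult with Cmult. rewrite IH. ring.
Qed.

Lemma cpow_cpow (x : C) (a b : nat) : cpow (cpow x a) b = cpow x (a * b).
Proof.
  induction b as [|b IH]; simpl.
  - rewrite Nat.mul_0_r. reflexivity.
  - rewrite Nat.mul_succ_r, Nat.add_comm, pow_n_plus, IH. reflexivity.
Qed.

Lemma Cmod_cpow (x : C) (k : nat) : Cmod (cpow x k) = (Cmod x ^ k)%R.
Proof.
  induction k as [|k IH]; simpl.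
  - apply Cmod_1.
  - change mult with Cmult. rewrite Cmod_mult, IH. reflexivity.
Qed.

Lemma cpow_RtoC (r : R) (k : nat) : cpow (RtoC r) k = RtoC (r ^ k).
Proof.
  induction k as [|k IH]; simpl; [reflexivity|].
  change mult with Cmult. rewrite IH, RtoC_mult. reflexivity.
Qed.

Lemma is_lim_seq_Cmod_sum_n (u : nat -> C) (l : C) :
  is_series (K := C_AbsRing) (V := C_NormedModule) u l ->
  is_lim_seq (fun n => Cmod (sum_n u n)) (Cmod l).
Proof.
  intros Hu.
  exact (filterlim_comp _ _ _ (sum_n u) (norm (K := C_AbsRing) (V := C_NormedModule))
           _ _ _ Hu (filterlim_norm l)).
Qed.

Lemma Cmod_series_le (u : nat -> C) (v : nat -> R) (l : C) (s : R) :
  is_series (K := C_AbsRing) (V := C_NormedModule) u l ->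
  is_series v s -> (forall k, Cmod (u k) <= v k)%R -> (Cmod l <= s)%R.
Proof.
  intros Hu Hv Huv.
  apply (is_lim_seq_le (fun n => Cmod (sum_n u n)) (sum_n v) (Cmod l) s);
    [intros n | exact (is_lim_seq_Cmod_sum_n u l Hu) | exact Hv].
  eapply Rle_trans; [apply (norm_sum_n_m (K := C_AbsRing) (V := C_NormedModule))|].
  apply sum_n_m_le. exact Huv.
Qed.

(* [is_derive] over [C_AbsRing] into [C_NormedModule] mixes two different topologies on [C],
   so Coquelicot's rules for [AbsRing_NormedModule] (identity, powers, products) do not
   apply; derivatives are obtained from this estimate instead. *)
Lemma is_derive_of_quadratic_error (F : C -> C) (z l : C) (d K : R) : (0 < d)%R ->
  (forall w, Cmod (w - z) < d -> Cmod (F w - F z - (w - z) * l) <= K * Cmod (w - z) ^ 2)%R ->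
  is_derive (K := C_AbsRing) (V := C_NormedModule) F z l.
Proof.
  intros Hd HK. split; [apply is_linear_scal_l|].
  intros x Hx.
  apply (is_filter_lim_locally_unique (K := C_AbsRing) (V := AbsRing_NormedModule C_AbsRing))
    in Hx.
  subst x. intros eps.
  apply (locally_norm_le_locally (K := C_AbsRing) (V := AbsRing_NormedModule C_AbsRing) z).
  pose proof (Rabs_pos K).
  assert (Hp : (0 < Rmin d (eps / (Rabs K + 1)))%R).
  { apply Rmin_pos; [exact Hd|]. apply Rdiv_lt_0_compat; [apply cond_pos | lra]. }
  exists (mkposreal _ Hp). intros y Hy. unfold ball_norm in Hy. simpl in Hy.
  change norm with Cmod in *. change minus with Cminus in *. change scal with Cmult.
  assert (Hyd : (Cmod (y - z) < d)%R) by (eapply Rlt_le_trans; [exact Hy | apply Rmin_l]).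
  assert (Hye : (Cmod (y - z) * (Rabs K + 1) <= eps)%R).
  { apply Rlt_le. apply (Rmult_lt_reg_r (/ (Rabs K + 1))); [apply Rinv_0_lt_compat; lra|].
    rewrite Rmult_assoc, Rinv_r, Rmult_1_r by lra.
    eapply Rlt_le_trans; [exact Hy | apply Rmin_r]. }
  pose proof (Cmod_ge_0 (y - z)). pose proof (Rle_abs K).
  eapply Rle_trans; [exact (HK y Hyd)|]. nra.
Qed.

Definition pow_remainder (w z : C) (k : nat) : C :=
  cpow w k - cpow z k - RtoC (INR k) * (w - z) * cpow z (k - 1).

Lemma Cmod_pow_remainder_le (w z : C) (r : R) (k : nat) :
  (Cmod w <= r)%R -> (Cmod z <= r)%R ->
  (Cmod (pow_remainder w z k) <= INR k * INR (k - 1) * r ^ (k - 2) * Cmod (w - z) ^ 2)%R.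
Proof.
  intros Hw Hz. pose proof (Cmod_ge_0 w) as Hw0.
  induction k as [|[|j] IH].
  1, 2: unfold pow_remainder; simpl; change one with (RtoC 1); change mult with Cmult.
  1, 2: match goal with |- (Cmod ?e <= _)%R => replace e with (RtoC 0) by ring end.
  1, 2: rewrite Cmod_0; simpl; lra.
  assert (E : pow_remainder w z (S (S j)) =
              w * pow_remainder w z (S j) + RtoC (INR (S j)) * (w - z) * (w - z) * cpow z j).
  { unfold pow_remainder.
    replace (S (S j) - 1)%nat with (S j) by lia. replace (S j - 1)%nat with j by lia.
    rewrite !S_INR, !RtoC_plus. cbn [pow_n]. change mult with Cmult. ring. }
  rewrite E. replace (S (S j) - 1)%nat with (S j) by lia. replace (S (S j) - 2)%nat with j by lia.
  replace (S j - 1)%nat with j in IH by lia. replace (S j - 2)%nat with (j - 1)%nat in IH by lia.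
  eapply Rle_trans; [apply Cmod_triangle|].
  rewrite !Cmod_mult, Cmod_R, Rabs_pos_eq, Cmod_cpow by apply pos_INR.
  pose proof (Cmod_ge_0 (w - z)). set (d := Cmod (w - z)) in *.
  pose proof (Cmod_ge_0 (pow_remainder w z (S j))).
  assert (Hzj : (Cmod z ^ j <= r ^ j)%R) by (apply pow_incr; split; [apply Cmod_ge_0 | exact Hz]).
  assert (Hr : (INR j * r ^ (j - 1) * r = INR j * r ^ j)%R).
  { destruct j; simpl; [ring|]. rewrite Nat.sub_0_r. ring. }
  assert (H1 : (Cmod w * Cmod (pow_remainder w z (S j)) <=
                INR (S j) * (INR j * r ^ j) * d ^ 2)%R).
  { rewrite <- Hr. eapply Rle_trans.
    - apply Rmult_le_compat; [lra | apply Cmod_ge_0 | exact Hw | exact IH].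
    - right. ring. }
  rewrite !S_INR in *. pose proof (pos_INR j). pose proof (pow_le r j ltac:(lra)).
  assert (0 <= (INR j + 1) * d * d)%R by (apply Rmult_le_pos; [apply Rmult_le_pos|]; lra).
  assert (0 <= (INR j + 1) * r ^ j * d ^ 2)%R by (apply Rmult_le_pos; [apply Rmult_le_pos|]; nra).
  nra.
Qed.

Lemma is_derive_monomial (c z : C) (k : nat) :
  is_derive (K := C_AbsRing) (V := C_NormedModule) (fun w => c * cpow w k) z
    (RtoC (INR k) * c * cpow z (k - 1)).
Proof.
  set (r := (Cmod z + 1)%R).
  apply (is_derive_of_quadratic_error _ _ _ 1
           (Cmod c * (INR k * INR (k - 1) * r ^ (k - 2)))); [lra|].
  intros w Hw.
  replace (c * cpow w k - c * cpow z k - (w - z) * (RtoC (INR k) * c * cpow z (k - 1)))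
    with (c * pow_remainder w z k) by (unfold pow_remainder; ring).
  rewrite Cmod_mult, Rmult_assoc. apply Rmult_le_compat_l; [apply Cmod_ge_0|].
  apply Cmod_pow_remainder_le; unfold r; [|lra].
  replace w with (z + (w - z)) by ring. eapply Rle_trans; [apply Cmod_triangle | lra].
Qed.

Lemma is_derive_sum_n_m {K : AbsRing} {V : NormedModule K}
  (F : nat -> K -> V) (dF : nat -> V) (x : K) (m n : nat) :
  (forall k, is_derive (F k) x (dF k)) ->
  is_derive (fun y => sum_n_m (fun k => F k y) m n) x (sum_n_m dF m n).
Proof.
  intros HF. induction n as [|n IH].
  - destruct m as [|m].
    + rewrite sum_n_n. apply (is_derive_ext (F 0%nat)); [|exact (HF 0%nat)].
      intros y. rewrite sum_n_n. reflexivity.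
    + rewrite sum_n_m_zero by lia. apply (is_derive_ext (fun _ => zero)); [|apply is_derive_const].
      intros y. rewrite sum_n_m_zero by lia. reflexivity.
  - destruct (le_lt_dec m (S n)) as [Hm|Hm].
    + rewrite sum_n_Sm by lia.
      apply (is_derive_ext (fun y => plus (sum_n_m (fun k => F k y) m n) (F (S n) y))).
      { intros y. rewrite sum_n_Sm by lia. reflexivity. }
      apply is_derive_plus; [exact IH | exact (HF (S n))].
    + rewrite sum_n_m_zero by lia. apply (is_derive_ext (fun _ => zero)); [|apply is_derive_const].
      intros y. rewrite sum_n_m_zero by lia. reflexivity.
Qed.

Lemma is_derive_cpoly (c : nat -> C) (m n : nat) (z : C) :
  is_derive (K := C_AbsRing) (V := C_NormedModule)
    (fun w => sum_n_m (fun k => c k * cpow w k) m n) z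
    (sum_n_m (fun k => RtoC (INR k) * c k * cpow z (k - 1)) m n).
Proof.
  apply (is_derive_sum_n_m (fun k w => c k * cpow w k)). intros k.
  apply is_derive_monomial.
Qed.

Lemma power_series_terms_bounded (a : nat -> C) (r : R) (s : C) : (0 <= r)%R ->
  is_series (K := C_AbsRing) (V := C_NormedModule) (fun k => a k * cpow (RtoC r) k) s ->
  exists M, forall k, (Cmod (a k) * r ^ k <= M)%R.
Proof.
  intros Hr Hs.
  set (u := fun k => a k * cpow (RtoC r) k).
  destruct (filterlim_bounded (K := C_AbsRing) (V := C_NormedModule) (sum_n u))
    as [M HM]; [exists s; exact Hs|].
  change norm with Cmod in HM.
  exists (2 * M)%R. intros k.
  replace (Cmod (a k) * r ^ k)%R with (Cmod (u k))
    by (unfold u; rewrite Cmod_mult, Cmod_cpow, Cmod_R, Rabs_pos_eq; lra).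
  pose proof (Rle_trans _ _ _ (Cmod_ge_0 _) (HM 0%nat)).
  destruct k as [|k].
  - pose proof (HM 0%nat) as H0. rewrite sum_O in H0. lra.
  - replace (u (S k)) with (sum_n u (S k) - sum_n u k)
      by (rewrite sum_Sn; change plus with Cplus; ring).
    eapply Rle_trans; [apply Cmod_triangle|]. rewrite Cmod_opp.
    pose proof (HM (S k)). pose proof (HM k). lra.
Qed.

Lemma CV_radius_ge_1 (a : nat -> C) (f : C -> C) :
  (forall z, disk 1 z ->
     is_series (K := C_AbsRing) (V := C_NormedModule) (fun k => a k * cpow z k) (f z)) ->
  Rbar_le 1 (CV_radius (fun k => Cmod (a k))).
Proof.
  intros hf.
  assert (Hr : forall r, (0 <= r < 1)%R -> Rbar_le r (CV_radius (fun k => Cmod (a k)))).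
  { intros r Hr. apply (proj1 (CV_radius_bounded _)).
    destruct (power_series_terms_bounded a r (f (RtoC r)) ltac:(lra)) as [M HM].
    { apply hf. unfold disk. rewrite Cmod_R, Rabs_pos_eq; lra. }
    exists M. intros n. rewrite Rabs_pos_eq; [apply HM|].
    apply Rmult_le_pos; [apply Cmod_ge_0 | apply pow_le; lra]. }
  pose proof (CV_radius_ge_0 (fun k => Cmod (a k))) as H0.
  destruct (CV_radius (fun k => Cmod (a k))) as [c| |]; simpl in *; auto.
  apply Rnot_lt_le. intros Hc. specialize (Hr ((c + 1) / 2)%R ltac:(lra)). simpl in Hr. lra.
Qed.

Lemma ex_series_derived_majorant (al : nat -> R) (rho : R) :
  (forall k, 0 <= al k)%R -> (0 <= rho < 1)%R -> Rbar_le 1 (CV_radius al) ->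
  ex_series (fun k => INR k * al k * rho ^ (k - 1))%R.
Proof.
  intros Hal Hrho Hrad.
  assert (Hlt : Rbar_lt (Rabs rho) (CV_radius (PS_derive al))).
  { rewrite CV_radius_derive, Rabs_pos_eq by lra.
    destruct (CV_radius al); simpl in *; auto; lra. }
  apply ex_series_incr_1.
  eapply ex_series_ext; [|exact (CV_disk_inside _ _ Hlt)].
  intros n. unfold PS_derive. rewrite Nat.sub_succ, Nat.sub_0_r, Rabs_pos_eq; [reflexivity|].
  apply Rmult_le_pos; [apply Rmult_le_pos; [apply pos_INR | apply Hal] | apply pow_le; lra].
Qed.

Lemma ex_series_second_derived_majorant (al : nat -> R) (rho : R) :
  (forall k, 0 <= al k)%R -> (0 <= rho < 1)%R -> Rbar_le 1 (CV_radius al) ->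
  ex_series (fun k => al k * (INR k * INR (k - 1) * rho ^ (k - 2)))%R.
Proof.
  intros Hal Hrho Hrad.
  assert (Hlt : Rbar_lt (Rabs rho) (CV_radius (PS_derive (PS_derive al)))).
  { rewrite !CV_radius_derive, Rabs_pos_eq by lra.
    destruct (CV_radius al); simpl in *; auto; lra. }
  apply (ex_series_incr_n _ 2).
  eapply ex_series_ext; [|exact (CV_disk_inside _ _ Hlt)].
  intros n. unfold PS_derive.
  replace (2 + n - 1)%nat with (S n) by lia. replace (2 + n - 2)%nat with n by lia.
  replace (2 + n)%nat with (S (S n)) by lia.
  pose proof (pos_INR (S n)). pose proof (pos_INR (S (S n))). pose proof (Hal (S (S n))).
  pose proof (pow_le rho n ltac:(lra)).
  rewrite Rabs_pos_eq; [Rfield|].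
  repeat apply Rmult_le_pos; auto.
Qed.

Lemma is_derive_power_series (a : nat -> C) (f : C -> C) :
  (forall z, disk 1 z ->
     is_series (K := C_AbsRing) (V := C_NormedModule) (fun k => a k * cpow z k) (f z)) ->
  forall z, disk 1 z -> exists Dz,
    is_series (K := C_AbsRing) (V := C_NormedModule)
      (fun k => RtoC (INR k) * a k * cpow z (k - 1)) Dz /\
    is_derive (K := C_AbsRing) (V := C_NormedModule) f z Dz.
Proof.
  intros hf z Hz. unfold disk in Hz.
  pose proof (CV_radius_ge_1 a f hf) as Hrad.
  assert (Hal : forall k, (0 <= Cmod (a k))%R) by (intros; apply Cmod_ge_0).
  pose proof (Cmod_ge_0 z).
  destruct (ex_series_le (K := C_AbsRing) (V := C_CompleteNormedModule)
              (fun k => RtoC (INR k) * a k * cpow z (k - 1))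
              (fun k => INR k * Cmod (a k) * Cmod z ^ (k - 1))%R) as [Dz HDz].
  { intros k. change norm with Cmod.
    rewrite !Cmod_mult, Cmod_R, Cmod_cpow, Rabs_pos_eq by apply pos_INR. lra. }
  { apply ex_series_derived_majorant; auto; lra. }
  exists Dz. split; [exact HDz|].
  set (rho := ((1 + Cmod z) / 2)%R).
  set (b := (fun k => Cmod (a k) * (INR k * INR (k - 1) * rho ^ (k - 2)))%R).
  assert (Hb : ex_series b) by (apply ex_series_second_derived_majorant; auto; unfold rho; lra).
  apply (is_derive_of_quadratic_error _ _ _ (rho - Cmod z) (Series b)); [unfold rho; lra|].
  intros w Hw.
  assert (Hwr : (Cmod w <= rho)%R).
  { replace w with (z + (w - z)) by ring. eapply Rle_trans; [apply Cmod_triangle | lra]. }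
  assert (Hw1 : disk 1 w) by (unfold disk, rho in *; lra).
  assert (HS : is_series (K := C_AbsRing) (V := C_NormedModule)
                 (fun k => a k * pow_remainder w z k) (f w - f z - (w - z) * Dz)).
  { eapply is_series_ext;
      [|exact (is_series_minus _ _ _ _ (is_series_minus _ _ _ _ (hf w Hw1) (hf z Hz))
                 (is_series_scal (w - z) _ _ HDz))].
    intros k. unfold pow_remainder.
    change plus with Cplus. change opp with Copp. change scal with Cmult. Cring. }
  rewrite Rmult_comm.
  apply (Cmod_series_le _ (fun k => Cmod (w - z) ^ 2 * b k)%R _ _ HS);
    [exact (is_series_scal (K := R_AbsRing) _ _ _ (Series_correct _ Hb))|].
  intros k. unfold b. rewrite Cmod_mult.
  pose proof (Cmod_pow_remainder_le w z rho k Hwr ltac:(unfold rho; lra)) as Hrem.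
  pose proof (Rmult_le_compat_l _ _ _ (Hal k) Hrem). lra.
Qed.

(** * Cauchy's estimate via roots of unity *)

Lemma is_series_sum_n {K : AbsRing} {V : NormedModule K}
  (u : nat -> nat -> V) (L : nat -> V) (n : nat) :
  (forall j, is_series (u j) (L j)) ->
  is_series (fun k => sum_n (fun j => u j k) n) (sum_n L n).
Proof.
  intros Hu. induction n as [|n IH].
  - rewrite sum_O. eapply is_series_ext; [|exact (Hu 0%nat)].
    intros k. rewrite sum_O. reflexivity.
  - rewrite sum_Sn.
    eapply is_series_ext; [|exact (is_series_plus _ _ _ _ IH (Hu (S n)))].
    intros k. rewrite sum_Sn. reflexivity.
Qed.

Lemma sum_n_single {G : AbelianMonoid} (f : nat -> G) (m n : nat) : (m <= n)%nat ->
  (forall k, k <> m -> (k <= n)%nat -> f k = zero) -> sum_n f n = f m.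
Proof.
  intros Hm Hf. induction n as [|n IH].
  - replace m with 0%nat by lia. apply sum_O.
  - rewrite sum_Sn. destruct (Nat.eq_dec m (S n)) as [->|Hne].
    + unfold sum_n.
      rewrite (sum_n_m_ext_loc _ (fun _ => zero)), sum_n_m_const_zero, plus_zero_l;
        [reflexivity|].
      intros k Hk. apply Hf; lia.
    + rewrite IH, (Hf (S n)), plus_zero_r; auto; try lia.
Qed.

Definition cis (t : R) : C := (cos t, sin t).

Lemma cis_add (s t : R) : cis s * cis t = cis (s + t).
Proof. unfold cis, Cmult. simpl. rewrite cos_plus, sin_plus. f_equal; ring. Qed.

Lemma cpow_cis (t : R) (k : nat) : cpow (cis t) k = cis (INR k * t).
Proof.
  induction k as [|k IH].
  - unfold cis. simpl. rewrite Rmult_0_l, cos_0, sin_0. reflexivity.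
  - change (cis t * cpow (cis t) k = cis (INR (S k) * t)).
    rewrite IH, cis_add, S_INR. f_equal. ring.
Qed.

Lemma Cmod_cis (t : R) : Cmod (cis t) = 1%R.
Proof.
  unfold Cmod, cis. cbn [fst snd]. rewrite <- sqrt_1. f_equal.
  pose proof (sin2_cos2 t). unfold Rsqr in *. nra.
Qed.

Definition unit_root (N : nat) : C := cis (2 * PI / INR N).

Lemma Cmod_unit_root_pow (N k : nat) : Cmod (cpow (unit_root N) k) = 1%R.
Proof. unfold unit_root. rewrite cpow_cis. apply Cmod_cis. Qed.

Lemma unit_root_pow_N (N : nat) : (0 < N)%nat -> cpow (unit_root N) N = RtoC 1.
Proof.
  intros HN. unfold unit_root. rewrite cpow_cis.
  replace (INR N * (2 * PI / INR N))%R with (2 * PI)%R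
    by (field; apply not_0_INR; lia).
  unfold cis. rewrite cos_2PI, sin_2PI. reflexivity.
Qed.

Lemma unit_root_pow_neq_1 (N q : nat) : (0 < q < N)%nat -> cpow (unit_root N) q <> RtoC 1.
Proof.
  intros Hq E. unfold unit_root in E. rewrite cpow_cis in E. injection E as Ecos _.
  assert (0 < INR q)%R by (apply lt_0_INR; lia).
  assert (INR q < INR N)%R by (apply lt_INR; lia).
  pose proof PI_RGT_0.
  set (t := (INR q * (2 * PI / INR N))%R) in Ecos.
  assert (Ht : (0 < t / 2 < PI)%R).
  { unfold t. split.
    - apply Rdiv_lt_0_compat; [|lra]. apply Rmult_lt_0_compat; [lra|].
      apply Rdiv_lt_0_compat; lra.
    - apply (Rmult_lt_reg_r (INR N)); [lra|]. field_simplify; [nra | lra]. }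
  replace t with (2 * (t / 2))%R in Ecos by field.
  rewrite cos_2a_sin in Ecos. pose proof (sin_gt_0 _ (proj1 Ht) (proj2 Ht)). nra.
Qed.

Lemma unit_root_shift_neq_1 (N m k : nat) : (m < N)%nat -> (k < N)%nat -> k <> m ->
  cpow (unit_root N) (N - m + k) <> RtoC 1.
Proof.
  intros Hm Hk Hkm.
  destruct (Nat.lt_ge_cases (N - m + k) N) as [Hlt|Hge].
  - apply unit_root_pow_neq_1. lia.
  - replace (N - m + k)%nat with (N + (k - m))%nat by lia.
    rewrite pow_n_plus, unit_root_pow_N by lia.
    change mult with Cmult. rewrite Cmult_1_l. apply unit_root_pow_neq_1. lia.
Qed.

Lemma geom_sum_cpow (x : C) (n : nat) :
  (x - 1) * sum_n (fun j => cpow x j) n = cpow x (S n) - 1.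
Proof.
  induction n as [|n IH].
  - rewrite sum_O. simpl. change one with (RtoC 1). change mult with Cmult. ring.
  - rewrite sum_Sn. change plus with Cplus.
    rewrite Cmult_plus_distr_l, IH. change (cpow x (S (S n))) with (x * (x * cpow x n)).
    simpl. change mult with Cmult. ring.
Qed.

Definition root_power_sum (N q : nat) : C :=
  sum_n (fun j => cpow (cpow (unit_root N) q) j) (N - 1).

Lemma root_power_sum_N (N q : nat) : (0 < N)%nat ->
  cpow (unit_root N) q = RtoC 1 -> root_power_sum N q = RtoC (INR N).
Proof.
  intros HN Hq. unfold root_power_sum. rewrite Hq.
  rewrite (sum_n_ext _ (fun _ => RtoC 1)) by (intros; rewrite cpow_RtoC, pow1; reflexivity).
  rewrite <- (Nat.succ_pred_pos N HN) at 2. rewrite <- Nat.sub_1_r.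
  induction (N - 1)%nat as [|n IH].
  - rewrite sum_O. reflexivity.
  - rewrite sum_Sn, IH, (S_INR (S n)), RtoC_plus. reflexivity.
Qed.

Lemma root_power_sum_0 (N q : nat) : (0 < N)%nat ->
  cpow (unit_root N) q <> RtoC 1 -> root_power_sum N q = 0.
Proof.
  intros HN Hq. unfold root_power_sum.
  pose proof (geom_sum_cpow (cpow (unit_root N) q) (N - 1)) as G.
  replace (S (N - 1)) with N in G by lia.
  rewrite cpow_cpow, Nat.mul_comm, <- cpow_cpow, unit_root_pow_N, cpow_RtoC, pow1 in G
    by exact HN.
  replace (RtoC 1 - 1) with (RtoC 0) in G by ring.
  destruct (Ceq_dec (sum_n (fun j => cpow (cpow (unit_root N) q) j) (N - 1)) 0) as [E|Hne];
    [exact E|].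
  exfalso. refine (Cmult_neq_0 _ _ _ Hne G). intros E. apply Hq.
  replace (cpow (unit_root N) q) with (cpow (unit_root N) q - 1 + 1) by Cring.
  rewrite E. Cring.
Qed.

Lemma Cmod_root_power_sum_le (N q : nat) : (0 < N)%nat ->
  (Cmod (root_power_sum N q) <= INR N)%R.
Proof.
  intros HN. unfold root_power_sum.
  eapply Rle_trans; [apply (norm_sum_n_m (K := C_AbsRing) (V := C_NormedModule))|].
  change norm with Cmod.
  rewrite (sum_n_m_ext _ (fun _ => 1%R))
    by (intros j; rewrite cpow_cpow; apply Cmod_unit_root_pow).
  rewrite sum_n_m_const. replace (S (N - 1) - 0)%nat with N by lia. lra.
Qed.

(* Averaging [G] against [w^(-m j)] over the points [rho w^j] filters out
   the coefficients of index [k = m (mod N)]. *)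
Lemma is_series_root_average (b : nat -> C) (G : C -> C) (rho : R) (N m : nat) :
  (0 <= rho)%R ->
  (forall z, Cmod z = rho ->
     is_series (K := C_AbsRing) (V := C_NormedModule) (fun k => b k * cpow z k) (G z)) ->
  is_series (K := C_AbsRing) (V := C_NormedModule)
    (fun k => b k * RtoC (rho ^ k) * root_power_sum N (N - m + k))
    (sum_n (fun j => cpow (unit_root N) ((N - m) * j) *
                     G (RtoC rho * cpow (unit_root N) j)) (N - 1)).
Proof.
  intros Hrho Hser.
  eapply is_series_ext;
    [|apply (is_series_sum_n
               (fun j k => cpow (unit_root N) ((N - m) * j) *
                           (b k * cpow (RtoC rho * cpow (unit_root N) j) k)))].
  - intros k. unfold root_power_sum, sum_n.
    rewrite <- (sum_n_m_mult_l (K := C_Ring)). apply sum_n_m_ext. intros j.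
    change mult with Cmult.
    rewrite cpow_mul, cpow_RtoC, !cpow_cpow, Nat.mul_add_distr_r, pow_n_plus, (Nat.mul_comm j k).
    change mult with Cmult. Cring.
  - intros j. apply (is_series_scal (K := C_AbsRing) (V := C_NormedModule)), Hser.
    rewrite Cmod_mult, Cmod_R, Cmod_unit_root_pow, Rabs_pos_eq by exact Hrho. ring.
Qed.

Lemma root_average_partial_sum_ge (b : nat -> C) (rho eps : R) (N m n : nat) :
  (0 <= rho)%R -> (m < N)%nat -> (N <= n)%nat ->
  (sum_n_m (fun k => Cmod (b k) * rho ^ k)%R N n <= eps)%R ->
  (INR N * (Cmod (b m) * rho ^ m) - INR N * eps <=
   Cmod (sum_n (fun k => b k * RtoC (rho ^ k) * root_power_sum N (N - m + k))%C n))%R.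
Proof.
  intros Hrho Hm Hn Htail.
  set (T := fun k => b k * RtoC (rho ^ k) * root_power_sum N (N - m + k)).
  assert (HTm : Cmod (T m) = (INR N * (Cmod (b m) * rho ^ m))%R).
  { unfold T. replace (N - m + m)%nat with N by lia.
    rewrite root_power_sum_N, !Cmod_mult, !Cmod_R, !Rabs_pos_eq;
      [ring | apply pos_INR | apply pow_le; lra | lia | apply unit_root_pow_N; lia]. }
  assert (Hhead : sum_n T (N - 1) = T m).
  { apply sum_n_single; [lia|]. intros k Hkm Hk. unfold T.
    rewrite root_power_sum_0, Cmult_0_r; [reflexivity | lia|].
    apply unit_root_shift_neq_1; lia. }
  assert (Hrest : (Cmod (sum_n_m T N n) <= INR N * eps)%R).
  { eapply Rle_trans; [apply (norm_sum_n_m (K := C_AbsRing) (V := C_NormedModule))|].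
    change norm with Cmod.
    eapply Rle_trans; [apply (sum_n_m_le _ (fun k => INR N * (Cmod (b k) * rho ^ k)))%R|].
    - intros k. unfold T. rewrite !Cmod_mult, Cmod_R, Rabs_pos_eq by (apply pow_le; lra).
      pose proof (Cmod_root_power_sum_le N (N - m + k) ltac:(lia)).
      pose proof (Cmod_ge_0 (b k)). pose proof (pow_le rho k Hrho).
      assert (0 <= Cmod (b k) * rho ^ k)%R by (apply Rmult_le_pos; lra). nra.
    - rewrite (sum_n_m_mult_l (K := R_Ring)). change mult with Rmult.
      apply Rmult_le_compat_l; [apply pos_INR | exact Htail]. }
  unfold sum_n. rewrite (sum_n_m_Chasles _ 0 (N - 1) n), <- HTm by lia.
  change plus with Cplus. change (sum_n_m T 0 (N - 1)) with (sum_n T (N - 1)).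
  rewrite Hhead. replace (S (N - 1)) with N by lia.
  pose proof (Cmod_triangle (T m + sum_n_m T N n) (- sum_n_m T N n)) as Htri.
  rewrite Cmod_opp in Htri.
  replace (T m + sum_n_m T N n + - sum_n_m T N n) with (T m) in Htri by ring.
  lra.
Qed.

Lemma cauchy_estimate (b : nat -> C) (G : C -> C) (rho M : R) :
  (0 < rho)%R -> ex_series (fun k => Cmod (b k) * rho ^ k)%R ->
  (forall z, Cmod z = rho ->
     is_series (K := C_AbsRing) (V := C_NormedModule) (fun k => b k * cpow z k) (G z)) ->
  (forall z, Cmod z = rho -> (Cmod (G z) <= M)%R) ->
  forall m, (Cmod (b m) * rho ^ m <= M)%R.
Proof.
  intros Hrho Hex Hser HG m. apply Rle_plus_epsilon. intros eps Heps.
  destruct (Cauchy_ex_series (K := R_AbsRing) _ Hex (mkposreal eps Heps)) as [N0 HN0].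
  set (N := S (max N0 m)).
  assert (HN : (0 < INR N)%R) by (apply lt_0_INR; unfold N; lia).
  pose proof (is_series_root_average b G rho N m ltac:(lra) Hser) as HA.
  set (A := sum_n _ (N - 1)) in HA.
  assert (Hup : (Cmod A <= INR N * M)%R).
  { eapply Rle_trans; [apply (norm_sum_n_m (K := C_AbsRing) (V := C_NormedModule))|].
    change norm with Cmod.
    rewrite (sum_n_m_le _ (fun _ => M)).
    - rewrite sum_n_m_const. replace (S (N - 1) - 0)%nat with N by (unfold N; lia). lra.
    - intros j. rewrite Cmod_mult, Cmod_unit_root_pow, Rmult_1_l. apply HG.
      rewrite Cmod_mult, Cmod_R, Cmod_unit_root_pow, Rabs_pos_eq by lra. ring. }
  assert (Hlow : Rbar_le (INR N * (Cmod (b m) * rho ^ m) - INR N * eps)%R (Cmod A)).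
  { refine (is_lim_seq_le_loc _ _ _ _ _ (is_lim_seq_const _) (is_lim_seq_Cmod_sum_n _ _ HA)).
    exists N. intros n Hn.
    apply root_average_partial_sum_ge; [lra | unfold N; lia | exact Hn|].
    specialize (HN0 N n ltac:(unfold N; lia) ltac:(lia)). change norm with Rabs in HN0.
    apply Rlt_le, (Rle_lt_trans _ _ _ (Rle_abs _) HN0). }
  cbn [Rbar_le] in Hlow.
  apply (Rmult_le_reg_l (INR N)); [exact HN|]. rewrite Rmult_plus_distr_l. lra.
Qed.

(** * The coefficient bound *)

Lemma le_of_forall_pow_le (X c : R) (k : nat) :
  (forall rho, 0 < rho < 1 -> X * rho ^ k <= c)%R -> (X <= c)%R.
Proof.
  intros H.
  set (u := fun n => (1 - (/ 2) ^ n)%R).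
  assert (Hu : is_lim_seq u 1).
  { replace 1%R with (1 - 0)%R by ring.
    apply (is_lim_seq_minus' (fun _ => 1%R)); [apply is_lim_seq_const|].
    apply is_lim_seq_geom. rewrite Rabs_pos_eq; lra. }
  assert (Hcont : continuity_pt (fun x => X * x ^ k)%R 1).
  { apply continuity_pt_mult; [apply continuity_pt_const; intros ? ? ; reflexivity|].
    apply derivable_continuous_pt, derivable_pt_pow. }
  pose proof (is_lim_seq_continuous (fun x => X * x ^ k)%R u 1 Hcont Hu) as Hlim.
  cbv beta in Hlim. rewrite pow1, Rmult_1_r in Hlim.
  refine (is_lim_seq_le_loc _ _ _ _ _ Hlim (is_lim_seq_const c)).
  exists 1%nat. intros n Hn. apply H. unfold u.
  pose proof (pow_lt_1_compat (/ 2) n ltac:(lra) Hn).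
  pose proof (pow_lt (/ 2) n ltac:(lra)). lra.
Qed.

Lemma sum_n_m_le_loc (u v : nat -> R) (m n : nat) :
  (forall k, (m <= k <= n)%nat -> u k <= v k)%R -> (sum_n_m u m n <= sum_n_m v m n)%R.
Proof.
  intros Huv.
  rewrite (sum_n_m_ext_loc u (fun k => Rmin (u k) (v k))).
  - apply sum_n_m_le. intros k. apply Rmin_r.
  - intros k Hk. rewrite Rmin_left by (apply Huv; exact Hk). reflexivity.
Qed.

Section CoefficientBound.

Variables (f phi : C -> C) (a : nat -> C).
Hypothesis ha0 : a 0%nat = 0.
Hypothesis hf : forall z, disk 1 z ->
  is_series (K := C_AbsRing) (V := C_NormedModule) (fun k => a k * cpow z k) (f z).
Hypothesis hphib : forall z, disk 1 z -> (Cmod (phi z) <= 1)%R.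
Hypothesis hrel : forall z, disk 1 z ->
  exists df, is_derive (K := C_AbsRing) (V := C_NormedModule) f z df /\
             z * df - f z = / 2 * (z * z) * phi z.

Lemma is_series_half_z2_phi (z : C) : disk 1 z ->
  is_series (K := C_AbsRing) (V := C_NormedModule)
    (fun k => (RtoC (INR k) - 1) * a k * cpow z k) (/ 2 * (z * z) * phi z).
Proof.
  intros Hz.
  destruct (is_derive_power_series a f hf z Hz) as [Dz [HDz Hderiv]].
  destruct (hrel z Hz) as [df [Hdf Hphi]].
  rewrite <- (is_C_derive_unique _ _ _ Hdf), (is_C_derive_unique _ _ _ Hderiv) in Hphi.
  rewrite <- Hphi.
  eapply is_series_ext;
    [|exact (is_series_minus _ _ _ _ (is_series_scal z _ _ HDz) (hf z Hz))].
  intros [|k]; change plus with Cplus; change opp with Copp; change scal with Cmult.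
  - simpl. Cring.
  - rewrite Nat.sub_succ, Nat.sub_0_r. change (cpow z (S k)) with (z * cpow z k). Cring.
Qed.

Lemma ex_series_coef_majorant (rho : R) : (0 < rho < 1)%R ->
  ex_series (fun k => Cmod ((RtoC (INR k) - 1) * a k) * rho ^ k)%R.
Proof.
  intros Hrho.
  apply (ex_series_le (K := R_AbsRing) (V := R_CompleteNormedModule) _
           (fun k => rho * (INR k * Cmod (a k) * rho ^ (k - 1)))%R).
  - intros [|j]; change norm with Rabs.
    + rewrite ha0, Cmult_0_r, Cmod_0, Rmult_0_l, Rabs_R0. simpl. lra.
    + rewrite Rabs_pos_eq by (apply Rmult_le_pos; [apply Cmod_ge_0 | apply pow_le; lra]).
      replace (RtoC (INR (S j)) - 1) with (RtoC (INR j)) by (rewrite S_INR, RtoC_plus; ring).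
      rewrite Cmod_mult, Cmod_R, Rabs_pos_eq, Nat.sub_succ, Nat.sub_0_r, S_INR by apply pos_INR.
      pose proof (Cmod_ge_0 (a (S j))). pose proof (pow_le rho j ltac:(lra)).
      assert (0 <= rho * Cmod (a (S j)) * rho ^ j)%R by (repeat apply Rmult_le_pos; lra).
      simpl. nra.
  - apply (ex_series_scal (K := R_AbsRing) (V := R_NormedModule)), ex_series_derived_majorant;
      [intros; apply Cmod_ge_0 | lra | exact (CV_radius_ge_1 a f hf)].
Qed.

Lemma Cmod_coef_le (k : nat) : (2 <= k)%nat -> (Cmod (a k) <= / (2 * INR (k - 1)))%R.
Proof.
  intros Hk.
  assert (Hb : forall rho, (0 < rho < 1)%R ->
                 (Cmod ((RtoC (INR k) - 1) * a k) * rho ^ k <= / 2)%R).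
  { intros rho Hrho.
    eapply Rle_trans;
      [apply (cauchy_estimate (fun k => (RtoC (INR k) - 1) * a k)
                (fun z => / 2 * (z * z) * phi z) rho (rho ^ 2 / 2));
       [lra | exact (ex_series_coef_majorant rho Hrho) | | ] |].
    - intros z Hz. apply is_series_half_z2_phi. unfold disk. lra.
    - intros z Hz. rewrite !Cmod_mult, Hz, Cmod_inv, Cmod_R, Rabs_pos_eq by (try injection; lra).
      pose proof (hphib z ltac:(unfold disk; lra)). pose proof (Cmod_ge_0 (phi z)).
      simpl. nra.
    - simpl. nra. }
  apply le_of_forall_pow_le in Hb. rewrite Cmod_mult in Hb.
  replace (RtoC (INR k) - 1) with (RtoC (INR (k - 1))) in Hb
    by (rewrite <- (Nat.succ_pred_pos k) at 2 by lia; rewrite S_INR, RtoC_plus, Nat.sub_1_r; ring).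
  rewrite Cmod_R, Rabs_pos_eq in Hb by apply pos_INR.
  assert (0 < INR (k - 1))%R by (apply lt_0_INR; lia).
  apply (Rmult_le_reg_l (INR (k - 1))); [assumption|].
  replace (INR (k - 1) * / (2 * INR (k - 1)))%R with (/ 2)%R by (field; lra).
  exact Hb.
Qed.

Lemma Cmod_partial_sum_deriv_lt_1 (rS : R) (n : nat) (z : C) :
  (0 < rS < 1)%R -> ((1 - rS) * ln (1 - rS) + 2 - 3 * rS = 0)%R -> disk rS z ->
  (Cmod (sum_n_m (fun k => RtoC (INR k) * a k * cpow z (k - 1))%C 2 n) < 1)%R.
Proof.
  intros HrS Hroot Hz.
  eapply Rle_lt_trans; [apply (norm_sum_n_m (K := C_AbsRing) (V := C_NormedModule))|].
  change norm with Cmod.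
  eapply Rle_lt_trans;
    [|exact (majorant_sum_lt_1 rS (Cmod z) n HrS Hroot (conj (Cmod_ge_0 z) Hz))].
  apply sum_n_m_le_loc. intros k Hk.
  rewrite !Cmod_mult, Cmod_R, Rabs_pos_eq, Cmod_cpow by apply pos_INR.
  pose proof (Cmod_coef_le k ltac:(lia)). pose proof (pos_INR k).
  pose proof (pow_le (Cmod z) (k - 1) (Cmod_ge_0 z)).
  apply Rmult_le_compat_r; [lra|]. apply Rmult_le_compat_l; lra.
Qed.

End CoefficientBound.

(** * Close-to-convexity of the partial sums *)

Lemma is_derive_C_id (z : C) :
  is_derive (K := C_AbsRing) (V := C_NormedModule) (fun w => w) z (RtoC 1).
Proof.
  apply (is_derive_of_quadratic_error _ _ _ 1 0); [lra|]. intros w _.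
  replace (w - z - (w - z) * RtoC 1) with (RtoC 0) by ring.
  rewrite Cmod_0. lra.
Qed.

Lemma convex_in_disk_id (r : R) : convex_in_disk r (fun z => z).
Proof.
  split; [|split].
  - intros z _. exists (RtoC 1). apply is_derive_C_id.
  - intros z w _ _ E. exact E.
  - intros z w t Hz Hw Ht. exists (RtoC (1 - t) * z + RtoC t * w). split; [|reflexivity].
    unfold disk in *. eapply Rle_lt_trans; [apply Cmod_triangle|].
    rewrite !Cmod_mult, !Cmod_R, !Rabs_pos_eq by lra.
    destruct (Rle_lt_dec t (1 / 2)).
    + pose proof (Rmult_lt_compat_l (1 - t) _ _ ltac:(lra) Hz).
      pose proof (Rmult_le_compat_l t _ _ ltac:(lra) (Rlt_le _ _ Hw)). nra.
    + pose proof (Rmult_le_compat_l (1 - t) _ _ ltac:(lra) (Rlt_le _ _ Hz)).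
      pose proof (Rmult_lt_compat_l t _ _ ltac:(lra) Hw). nra.
Qed.

Lemma close_to_convex_of_Re_deriv_pos (r : R) (g : C -> C) :
  (forall z, disk r z -> exists dg : C,
     is_derive (K := C_AbsRing) (V := C_NormedModule) g z dg /\ (0 < Re dg)%R) ->
  close_to_convex_in_disk r g.
Proof.
  intros Hg. exists (fun z => z). split; [apply convex_in_disk_id|].
  intros z Hz. destruct (Hg z Hz) as [dg [Hdg Hre]].
  exists dg, (RtoC 1). split; [exact Hdg|]. split; [apply is_derive_C_id|].
  replace (dg / RtoC 1) with dg; [exact Hre|]. field.
Qed.

Lemma is_derive_partial_sum (a : nat -> C) (n : nat) (z : C) :
  is_derive (K := C_AbsRing) (V := C_NormedModule) (partial_sum a n) z
    (RtoC 1 + sum_n_m (fun k => RtoC (INR k) * a k * cpow z (k - 1)) 2 n).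
Proof.
  apply (is_derive_plus (K := C_AbsRing) (V := C_NormedModule) (fun w => w));
    [apply is_derive_C_id | apply is_derive_cpoly].
Qed.

Lemma Re_1_plus_pos (s : C) : (Cmod s < 1)%R -> (0 < Re (RtoC 1 + s))%R.
Proof.
  intros Hs. pose proof (re_le_Cmod s) as Hre.
  change (Re (RtoC 1 + s)) with (1 + Re s)%R.
  pose proof (Rabs_Ropp (Re s)). pose proof (Rle_abs (- Re s)). lra.
Qed.

Theorem theorem2p3
  (f phi : C -> C) (a : nat -> C) (rS : R)
  (* f(z) = z + sum_{k>=2} a_k z^k, analytic in the unit disk *)
  (ha0 : a 0%nat = 0) (ha1 : a 1%nat = 1)
  (hf : forall z : C, disk 1 z ->
          is_series (K := C_AbsRing) (V := C_NormedModule)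
            (fun k => a k * pow_n (K := C_Ring) z k) (f z))
  (* phi analytic in the unit disk with |phi| <= 1 *)
  (hphi : analytic_on_disk 1 phi)
  (hphib : forall z : C, disk 1 z -> (Cmod (phi z) <= 1)%R)
  (* z f'(z) - f(z) = (1/2) z^2 phi(z) in the unit disk *)
  (hrel : forall z : C, disk 1 z ->
            exists df : C,
              is_derive (K := C_AbsRing) (V := C_NormedModule) f z df /\
              z * df - f z = / 2 * (z * z) * phi z)
  (* r_S : the root in (0,1) of (1-r) ln(1-r) + 2 - 3r = 0 *)
  (hrS : (0 < rS < 1)%R)
  (hrSeq : ((1 - rS) * ln (1 - rS) + 2 - 3 * rS = 0)%R) :
  forall n : nat, (2 <= n)%nat ->
    close_to_convex_in_disk rS (partial_sum a n).
Proof.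
  intros n _. apply close_to_convex_of_Re_deriv_pos. intros z Hz.
  eexists. split; [apply is_derive_partial_sum|].
  apply Re_1_plus_pos, (Cmod_partial_sum_deriv_lt_1 f phi a ha0 hf hphib hrel rS); assumption.
Qed.
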